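(* Let $n\ge 2$ and $\gamma_1,\dots,\gamma_n>0$. Let $A\in\mathbb{R}^{n\times n}$ be the matrix with $A_{ii}=-1$ for $i=1,\dots,n$, $A_{1n}=-\gamma_1$, $A_{i,i-1}=\gamma_i$ for $i=2,\dots,n$, and all other entries equal to $0$, i.e. $$A=\begin{bmatrix} -1 & 0 & \cdots & 0 & -\gamma_1\\ \gamma_2 & -1 & & & 0\\ 0&\gamma_3&-1&&\vdots\\ \vdots&&\ddots&\ddots&0\\ 0&\cdots&0&\gamma_n&-1\end{bmatrix}.$$ Then there exists a diagonal matrix $D$ with positive diagonal entries such that $DA+A^TD$ is negative definite if and only if $$\cos(\pi/n)\,(\gamma_1\gamma_2\cdots\gamma_n)^{1/n}<1,$$ which for $n\ge 3$ is equivalent to $\gamma_1\cdots\gamma_n<\sec(\pi/n)^n$ (and for $n=2$ holds for all positive $\gamma_1,\gamma_2$).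
   Context: A matrix $A$ is called diagonally stable if $DA+A^TD<0$ (negative definite) for some diagonal $D>0$. *)

From HB Require Import structures.
From mathcomp Require Import all_boot all_order all_algebra.
From mathcomp Require Import all_classical all_reals all_analysis.
Set Implicit Arguments. Unset Strict Implicit. Unset Printing Implicit Defensive.
Import Order.TTheory GRing.Theory Num.Theory.
Local Open Scope ring_scope.

(* The cyclic matrix of the statement, 0-indexed: row 0 has -gamma_0 in the
   last column, row i >= 1 has gamma_i in column i-1, diagonal is -1. *)
Definition cyc_mx (R : realType) (n : nat) (g : 'I_n -> R) : 'M[R]_n :=
  \matrix_(i, j) (if i == j then -1
                  else if ((i : nat) == 0%N) && ((j : nat) == n.-1) then - g i
                  else if (i : nat) == j.+1 then g i else 0).

Definition negdef (R : realType) (n : nat) (M : 'M[R]_n) : Prop :=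
  forall x : 'cV[R]_n, x != 0 -> (x^T *m M *m x) 0 0 < 0.

Definition diag_stable (R : realType) (n : nat) (A : 'M[R]_n) : Prop :=
  exists d : 'rV[R]_n, (forall i, 0 < d 0 i) /\
    negdef (diag_mx d *m A + A^T *m diag_mx d).

From HB Require Import structures.
From mathcomp Require Import all_boot all_order all_algebra.
From mathcomp Require Import all_classical all_reals all_analysis.
From mathcomp Require Import ring lra zify.
Set Implicit Arguments. Unset Strict Implicit. Unset Printing Implicit Defensive.
Import Order.TTheory GRing.Theory Num.Theory.
Local Open Scope ring_scope.

(* Write n = p + 2, t = pi / n and let c be the geometric mean of the gamma_i.
   With the weights r_k = gamma_2 ... gamma_(k+1) / c^k, the choice
   D = diag(r_k^-2) and the substitution x_k = r_k y_k turn the quadratic form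
   x^T (D A + A^T D) x / 2 into
     c (y_0 y_1 + ... + y_(n-2) y_(n-1) - y_0 y_(n-1)) - (y_0^2 + ... + y_(n-1)^2).
   The largest eigenvalue of the "anti-cyclic" form in parentheses is cos t:
   the bound comes from an explicit sum of squares whose coefficients are the
   sines sin(k t), so c cos t < 1 suffices.  Conversely, for any diagonal D > 0,
   adding the form on the vectors (r_k cos(k t))_k and (r_k sin(k t))_k gives
   (c cos t - 1) sum_k d_k r_k^2, which must be negative. *)

Lemma sos_step (R : numFieldType) (c a b e w y y' z SY SC y0 : R) :
  b != 0 -> e != 0 -> e = 2 * c * b - a -> w ^+ 2 = b ^+ 2 - a * e ->
  (c * SY - SC + a / (2 * b) * (y ^+ 2 + z ^+ 2) - w / b * (y * z) + z * y0)
  + (e * y - b * y' + w * z) ^+ 2 / (2 * (b * e))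
  = c * (SY + y ^+ 2) - (SC + y * y') + b / (2 * e) * (y' ^+ 2 + z ^+ 2)
    - w / e * (y' * z) + z * y0.
Proof.
move=> b0 e0 eE wE.
transitivity (c * (SY + y ^+ 2) - (SC + y * y') + b / (2 * e) * (y' ^+ 2 + z ^+ 2)
    - w / e * (y' * z) + z * y0 + (w ^+ 2 - (b ^+ 2 - a * e)) * z ^+ 2 / (2 * (b * e))).
  by rewrite eE; field; rewrite -eE e0 b0.
by rewrite -wE subrr !mul0r addr0.
Qed.

Section ChebyshevSequence.
Variables (R : realFieldType) (c : R) (s : nat -> R).
Hypotheses (s_rec : forall k, s k.+2 = 2 * c * s k.+1 - s k) (s0 : s 0%N = 0).

Lemma cassini m : s m.+1 ^+ 2 - s m * s m.+2 = s 1%N ^+ 2.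
Proof.
elim: m => [|m IH]; first by rewrite s0 mul0r subr0.
by rewrite -IH (s_rec m.+1) (s_rec m); ring.
Qed.

(* The LDL^T decomposition of the tridiagonal form c sum y_k^2 - sum y_k y_(k+1),
   with pivots s_(k+2) / (2 s_(k+1)), carried along with the coupling to z. *)
Lemma chain_form_sos (y : nat -> R) (z : R) m :
  (forall k, (k <= m)%N -> s k.+1 != 0) ->
  \sum_(k < m) (s k.+2 * y k - s k.+1 * y k.+1 + s 1%N * z) ^+ 2
       / (2 * (s k.+1 * s k.+2))
  = c * \sum_(k < m) y k ^+ 2 - \sum_(k < m) y k * y k.+1
    + s m / (2 * s m.+1) * (y m ^+ 2 + z ^+ 2) - s 1%N / s m.+1 * (y m * z)
    + z * y 0%N.
Proof.
elim: m => [|m IH] s_neq0.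
  by rewrite !big_ord0 s0; field; apply: s_neq0.
rewrite !big_ord_recr /= IH => [|k km]; last exact/s_neq0/leqW.
apply: sos_step; [exact: s_neq0 | exact: s_neq0 | exact: s_rec |].
by rewrite cassini.
Qed.

Lemma anticyclic_form_le (y : nat -> R) p :
  (forall k, (0 < k < p.+2)%N -> 0 < s k) -> s p.+2 = 0 ->
  \sum_(i < p.+1) y i * y i.+1 - y 0%N * y p.+1 <= c * \sum_(i < p.+2) y i ^+ 2.
Proof.
move=> s_gt0 sp2.
have s_neq0 k : (k <= p)%N -> s k.+1 != 0 by move=> kp; rewrite gt_eqF ?s_gt0.
have sp1_gt0 : 0 < s p.+1 by apply: s_gt0; lia.
have s1_gt0 : 0 < s 1%N by apply: s_gt0.
have spE : s p = 2 * c * s p.+1.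
  by apply/eqP; rewrite -subr_eq0 -opprB oppr_eq0 -s_rec sp2.
have s1E : s 1%N = s p.+1.
  apply/eqP; rewrite -(eqrXn2 (ltn0Sn 1)) ?ltW //.
  by rewrite -(cassini p) sp2 mulr0 subr0.
have sos_ge0 : 0 <= \sum_(k < p)
    (s k.+2 * y k - s k.+1 * y k.+1 + s 1%N * y p.+1) ^+ 2 / (2 * (s k.+1 * s k.+2)).
  apply: sumr_ge0 => k _; rewrite divr_ge0 ?sqr_ge0 // mulr_ge0 // ltW //.
  by rewrite mulr_gt0 // s_gt0 //; have := ltn_ord k; lia.
rewrite chain_form_sos // spE s1E divff ?gt_eqF // mul1r in sos_ge0.
rewrite (_ : 2 * c * s p.+1 / (2 * s p.+1) = c) in sos_ge0; last by field; rewrite gt_eqF.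
move: sos_ge0; rewrite 2!big_ord_recr /= big_ord_recr /=; lra.
Qed.

End ChebyshevSequence.

Lemma sin_natS2 (R : realType) (t : R) k :
  sin (k.+2%:R * t) = 2 * cos t * sin (k.+1%:R * t) - sin (k%:R * t).
Proof.
have -> : k.+2%:R * t = k.+1%:R * t + t by rewrite -natr1 mulrDl mul1r.
have -> : k%:R * t = k.+1%:R * t - t by rewrite -natr1 mulrDl mul1r addrK.
by rewrite sinD sinB; ring.
Qed.

Lemma anticyclic_form_le_cos (R : realType) p (y : nat -> R) :
  \sum_(i < p.+1) y i * y i.+1 - y 0%N * y p.+1
    <= cos (pi / p.+2%:R) * \sum_(i < p.+2) y i ^+ 2.
Proof.
set t := pi / p.+2%:R.
have tn : p.+2%:R * t = pi by rewrite /t mulrC divfK ?pnatr_eq0.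
apply: (@anticyclic_form_le _ _ (fun k => sin (k%:R * t))).
- exact: sin_natS2.
- by rewrite mul0r sin0.
- move=> k /andP[k0 kn]; apply: sin_gt0_pi; rewrite mulr_gt0 ?ltr0n ?divr_gt0 ?pi_gt0 //=.
  by rewrite -tn ltr_pM2r ?ltr_nat // divr_gt0 ?pi_gt0 ?ltr0n.
- by rewrite tn sinpi.
Qed.

Lemma negdef_le (R : realType) n (M : 'M[R]_n) :
  negdef M -> forall x : 'cV[R]_n, (x^T *m M *m x) 0 0 <= 0.
Proof. by move=> M_neg x; have [->|/M_neg/ltW //] := eqVneq x 0; rewrite mulmx0 mxE. Qed.

Section CyclicMatrix.
Variables (R : realType) (p : nat) (G : nat -> R).

Local Notation A := (cyc_mx (fun i : 'I_p.+2 => G i)).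

Lemma cyc_mx_mulmx (X : nat -> R) (i : 'I_p.+2) :
  (A *m \col_(j < p.+2) X j) i 0 =
  - X i + (if (i : nat) == 0%N then - G 0%N * X p.+1 else G i * X i.-1).
Proof.
rewrite !mxE (bigD1 i) //= !mxE eqxx mulN1r; congr (_ + _).
case: i => [[|k] ki] /=.
  rewrite (bigD1 ord_max) //= !mxE /= !eqxx /= big1 ?addr0 // => j /andP[ji jmax].
  rewrite !mxE eq_sym (negbTE ji) (_ : (j : nat) == p.+1 = false) ?mul0r //.
  by apply/negbTE; apply: contra jmax => /eqP jE; apply/eqP/val_inj.
have kn : (k < p.+2)%N by lia.
rewrite (bigD1 (Ordinal kn)) /=; last by apply/eqP => /(congr1 val) /= /eqP; lia.
rewrite !mxE /= (_ : Ordinal ki == Ordinal kn = false); last first.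
  by apply/negbTE/eqP => /(congr1 val) /= /eqP; lia.
rewrite eqxx big1 ?addr0 // => j /andP[ji jk].
rewrite !mxE eq_sym (negbTE ji) (_ : k.+1 == (j : nat).+1 = false) ?mul0r //.
by apply/negbTE; apply: contra jk => /eqP[jE]; apply/eqP/val_inj.
Qed.

Definition cyc_form (d x : nat -> R) : R :=
  \sum_(i < p.+1) d i.+1 * G i.+1 * x i.+1 * x i - d 0%N * G 0%N * x 0%N * x p.+1
  - \sum_(i < p.+2) d i * x i ^+ 2.

Lemma cyc_quadratic_form (d x : nat -> R) :
  ((\col_(i < p.+2) x i)^T *m (diag_mx (\row_(i < p.+2) d i) *m A
     + A^T *m diag_mx (\row_(i < p.+2) d i)) *m \col_(i < p.+2) x i) 0 0
  = 2 * cyc_form d x.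
Proof.
set xv := \col_(i < p.+2) x i; set D := diag_mx _; rewrite mulmxDr mulmxDl.
have -> : xv^T *m (A^T *m D) *m xv = (xv^T *m (D *m A) *m xv)^T.
  by rewrite !trmx_mul !trmxK tr_diag_mx !mulmxA.
rewrite mxE [_^T 0 0]mxE -mulr2n -[LHS]mulr_natl; congr (_ * _).
rewrite mulmxA mul_mx_diag -mulmxA mxE.
rewrite (eq_bigr (fun i : 'I_p.+2 => - (d i * x i ^+ 2) + x i * d i *
    (if (i : nat) == 0%N then - G 0%N * x p.+1 else G i * x i.-1))); last first.
  by move=> i _; rewrite cyc_mx_mulmx !mxE; ring.
rewrite big_split /= sumrN [X in _ + X]big_ord_recl /=.
rewrite (eq_bigr (fun i : 'I_p.+1 => d i.+1 * G i.+1 * x i.+1 * x i)); last first.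
  by move=> i _; rewrite /bump /= add1n; ring.
rewrite /cyc_form; ring.
Qed.

Variable c : R.
Hypotheses (G_gt0 : forall k, 0 < G k) (c_gt0 : 0 < c)
  (c_geomean : c ^+ p.+2 = \prod_(i < p.+2) G i).

Definition cyc_weight k := (\prod_(i < k) G i.+1) / c ^+ k.

Local Notation r := cyc_weight.
Local Notation t := (pi / p.+2%:R : R).

Lemma cyc_weight0 : r 0%N = 1.
Proof. by rewrite /r big_ord0 expr0 divr1. Qed.

Lemma cyc_weightS k : r k.+1 = r k * G k.+1 / c.
Proof. by rewrite /r big_ord_recr exprSr /=; field; rewrite expf_neq0 ?gt_eqF. Qed.

Lemma cyc_weight_gt0 k : 0 < r k.
Proof. by rewrite divr_gt0 ?exprn_gt0 ?prodr_gt0. Qed.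

Lemma G0_cyc_weight : G 0%N * r p.+1 = c.
Proof.
apply: (@mulIf _ (c ^+ p.+1)); first by rewrite expf_neq0 ?gt_eqF.
by rewrite /r -mulrA divfK ?expf_neq0 ?gt_eqF // -exprS c_geomean [RHS]big_ord_recl.
Qed.

Lemma cyc_form_rotation (d : nat -> R) :
  cyc_form d (fun k => r k * cos (k%:R * t)) + cyc_form d (fun k => r k * sin (k%:R * t))
  = (cos t * c - 1) * \sum_(i < p.+2) d i * r i ^+ 2.
Proof.
have cosB_step k : cos (k.+1%:R * t) * cos (k%:R * t) + sin (k.+1%:R * t) * sin (k%:R * t)
    = cos t by rewrite -cosB -natr1 mulrDl mul1r; congr cos; ring.
have cos_last : cos (p.+1%:R * t) = - cos t.
  have -> : p.+1%:R * t = pi - t.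
    apply: (addIr t); rewrite subrK -[X in _ + X]mul1r -mulrDl natr1.
    by rewrite mulrC divfK ?pnatr_eq0.
  by rewrite cosB cospi sinpi mul0r addr0 mulN1r.
have chain : \sum_(i < p.+1) d i.+1 * G i.+1 * (r i.+1 * cos (i.+1%:R * t)) * (r i * cos (i%:R * t))
    + \sum_(i < p.+1) d i.+1 * G i.+1 * (r i.+1 * sin (i.+1%:R * t)) * (r i * sin (i%:R * t))
    = cos t * c * \sum_(i < p.+1) d i.+1 * r i.+1 ^+ 2.
  rewrite -big_split mulr_sumr; apply: eq_bigr => i _ /=.
  by rewrite -(cosB_step i) cyc_weightS; field; rewrite gt_eqF.
have squares : \sum_(i < p.+2) d i * (r i * cos (i%:R * t)) ^+ 2
    + \sum_(i < p.+2) d i * (r i * sin (i%:R * t)) ^+ 2 = \sum_(i < p.+2) d i * r i ^+ 2.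
  rewrite -big_split; apply: eq_bigr => i _ /=.
  by rewrite !exprMn -!mulrDr cos2Dsin2 mulr1.
have corner : d 0%N * G 0%N * (r 0%N * cos (0%:R * t)) * (r p.+1 * cos (p.+1%:R * t))
    + d 0%N * G 0%N * (r 0%N * sin (0%:R * t)) * (r p.+1 * sin (p.+1%:R * t))
    = - (cos t * c * (d 0%N * r 0%N ^+ 2)).
  rewrite mul0r cos0 sin0 cos_last cyc_weight0 -G0_cyc_weight; ring.
rewrite /cyc_form addrACA -opprD addrACA -opprD chain corner squares.
rewrite (big_ord_recl _ _ : _ = d 0%N * r 0%N ^+ 2 + \sum_(i < p.+1) d i.+1 * r i.+1 ^+ 2).
ring.
Qed.

Lemma cyc_form_weighted (y : nat -> R) :
  cyc_form (fun k => (r k ^+ 2)^-1) (fun k => r k * y k)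
  = c * (\sum_(i < p.+1) y i * y i.+1 - y 0%N * y p.+1) - \sum_(i < p.+2) y i ^+ 2.
Proof.
have r_neq0 k : r k != 0 by rewrite gt_eqF ?cyc_weight_gt0.
have chain : \sum_(i < p.+1) (r i.+1 ^+ 2)^-1 * G i.+1 * (r i.+1 * y i.+1) * (r i * y i)
    = c * \sum_(i < p.+1) y i * y i.+1.
  rewrite mulr_sumr; apply: eq_bigr => i _.
  by rewrite cyc_weightS; field; rewrite r_neq0 !gt_eqF.
have corner : (r 0%N ^+ 2)^-1 * G 0%N * (r 0%N * y 0%N) * (r p.+1 * y p.+1)
    = c * (y 0%N * y p.+1).
  by rewrite cyc_weight0 -G0_cyc_weight; field.
have squares : \sum_(i < p.+2) (r i ^+ 2)^-1 * (r i * y i) ^+ 2 = \sum_(i < p.+2) y i ^+ 2.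
  by apply: eq_bigr => i _; field.
by rewrite /cyc_form chain corner squares mulrBr.
Qed.

Lemma cyc_diag_stable_lt1 : diag_stable A -> cos t * c < 1.
Proof.
case=> d [d_gt0 d_negdef].
have dE : d = \row_(i < p.+2) d 0 (inord i) by apply/rowP => i; rewrite mxE inord_val.
rewrite dE in d_negdef; pose D : nat -> R := fun k => d 0 (inord k).
have cos_neg : 2 * cyc_form D (fun k => r k * cos (k%:R * t)) < 0.
  rewrite -cyc_quadratic_form; apply: d_negdef; apply/eqP => /colP/(_ ord0).
  by rewrite !mxE mul0r cos0 cyc_weight0 mulr1 => /eqP; rewrite oner_eq0.
have sin_nonpos : 2 * cyc_form D (fun k => r k * sin (k%:R * t)) <= 0.
  by rewrite -cyc_quadratic_form; apply: negdef_le.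
have S_gt0 : 0 < \sum_(i < p.+2) D i * r i ^+ 2.
  rewrite big_ord_recl cyc_weight0 expr1n mulr1 ltr_pwDl //; first exact: d_gt0.
  by apply: sumr_ge0 => i _; rewrite mulr_ge0 ?sqr_ge0 ?ltW ?d_gt0.
have : (cos t * c - 1) * \sum_(i < p.+2) D i * r i ^+ 2 < 0.
  by rewrite -cyc_form_rotation; lra.
by rewrite pmulr_llt0 //; lra.
Qed.

Lemma cyc_lt1_diag_stable : cos t * c < 1 -> diag_stable A.
Proof.
move=> cos_c_lt1; exists (\row_(i < p.+2) (r i ^+ 2)^-1); split.
  by move=> i; rewrite mxE invr_gt0 exprn_gt0 ?cyc_weight_gt0.
move=> x x_neq0.
pose y k := x (inord k) 0 / r k.
have xE : x = \col_(i < p.+2) (r i * y i).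
  by apply/colP => i; rewrite mxE /y inord_val mulrC divfK ?gt_eqF ?cyc_weight_gt0.
rewrite xE (cyc_quadratic_form (fun k => (r k ^+ 2)^-1) (fun k => r k * y k)).
rewrite cyc_form_weighted pmulr_rlt0 //.
have Y_gt0 : 0 < \sum_(i < p.+2) y i ^+ 2.
  rewrite lt_def sumr_ge0 ?andbT => [|i _]; last exact: sqr_ge0.
  apply: contra x_neq0 => /eqP Y0; rewrite xE; apply/eqP/colP => i; rewrite !mxE.
  have : y i ^+ 2 == 0 by rewrite (psumr_eq0P _ Y0) // => j _; exact: sqr_ge0.
  by rewrite sqrf_eq0 => /eqP ->; rewrite mulr0.
have anticyclic_le := anticyclic_form_le_cos p y.
have : c * (\sum_(i < p.+1) y i * y i.+1 - y 0%N * y p.+1)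
         <= c * cos t * \sum_(i < p.+2) y i ^+ 2.
  by rewrite -mulrA ler_wpM2l // ltW.
have : c * cos t * \sum_(i < p.+2) y i ^+ 2 < \sum_(i < p.+2) y i ^+ 2.
  by rewrite gtr_pMl // mulrC.
lra.
Qed.

Lemma diag_stable_cyc_mxP : diag_stable A <-> cos t * c < 1.
Proof. by split; [exact: cyc_diag_stable_lt1 | exact: cyc_lt1_diag_stable]. Qed.

End CyclicMatrix.

Lemma powR_invn_expn (R : realType) (x : R) n :
  0 <= x -> (0 < n)%N -> powR x n%:R^-1 ^+ n = x.
Proof.
move=> x_ge0 n_gt0.
by rewrite -powR_mulrn ?powR_ge0 // -powRrM mulVf ?powRr1 // pnatr_eq0 -lt0n.
Qed.

Lemma mulr_lt1_expn (R : realFieldType) (a x : R) n :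
  (0 < n)%N -> 0 < a -> 0 <= x -> (a * x < 1) = (x ^+ n < a^-1 ^+ n).
Proof.
move=> n_gt0 a_gt0 x_ge0.
by rewrite ltr_pXn2r ?nnegrE ?invr_ge0 ?(ltW a_gt0) // -(ltr_pM2l a_gt0) mulfV ?gt_eqF.
Qed.

Theorem theorem1 (R : realType) (n : nat) (hn : (2 <= n)%N)
    (g : 'I_n -> R) (hg : forall i, 0 < g i) :
  (diag_stable (cyc_mx g) <->
     cos (pi / n%:R) * powR (\prod_i g i) (n%:R^-1) < 1)
  /\ ((3 <= n)%N ->
      (cos (pi / n%:R) * powR (\prod_i g i) (n%:R^-1) < 1 <->
       \prod_i g i < (cos (pi / n%:R))^-1 ^+ n))
  /\ (n = 2%N -> cos (pi / n%:R) * powR (\prod_i g i) (n%:R^-1) < 1).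
Proof.
case: n hn g hg => [|[|p]] // _ g g_gt0.
pose G k := g (inord k).
have gE : g = (fun i : 'I_p.+2 => G i) by apply/funext => i; rewrite /G inord_val.
have P_gt0 : 0 < \prod_i g i by rewrite prodr_gt0.
have c_geomean := powR_invn_expn (ltW P_gt0) (ltn0Sn p.+1).
split; [|split].
- rewrite {1}gE; apply: diag_stable_cyc_mxP => [k||]; first exact: g_gt0.
  + exact: powR_gt0.
  + by rewrite c_geomean gE.
- move=> p_ge1; rewrite (mulr_lt1_expn (n := p.+2)) ?powR_ge0 ?c_geomean //.
  apply: cos_gt0_pihalf; apply/andP; split.
    by rewrite (@lt_trans _ _ 0) ?oppr_lt0 ?divr_gt0 ?pi_gt0 ?ltr0n.
  by rewrite ltr_pM2l ?pi_gt0 // ltf_pV2 ?posrE ?ltr0n // ltr_nat.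
- case=> p0; have -> : p.+2%:R = 2 :> R by rewrite p0.
  by rewrite cos_pihalf mul0r ltr01.
Qed.
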